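(* Let $K$ be a kite (built from a triangle with angles $\alpha,\beta$ adjacent to a side of length $1$) in standard position, and let $K_1=K,K_2,\dots,K_n$ be a kite unfolding sequence given by a combinatorics of length $n$ (i.e. $n-1$ rotations). Let $(x^{\alpha}_n,y^{\alpha}_n)$ and $(x^{\beta}_n,y^{\beta}_n)$ be the coordinates of the $\alpha$-vertex and $\beta$-vertex of $K_n$, and $(x_n,y_n)$ the coordinates of either of the two side vertices of $K_n$. Then: (1) $x^{\alpha}_n,y^{\alpha}_n,x^{\beta}_n,y^{\beta}_n$ are trigonometric polynomials in $\alpha,\beta$ with integer coefficients, depending only on the combinatorics, of degree at most $2n-2$; (2) $x_n=P(\alpha,\beta)+\frac{\sin\beta}{\sin(\alpha+\beta)}\cos(m\alpha+l\beta)$ and $y_n=Q(\alpha,\beta)+\frac{\sin\beta}{\sin(\alpha+\beta)}\sin(m\alpha+l\beta)$, where $P,Q$ are trigonometric polynomials with integer coefficients of degree at most $2n-2$ and $m,l$ are integers with $|m|+|l|\le 2n-1$.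
   Context: Let $T$ be a triangle with a side $AB$ of length $1$ whose adjacent angles are $\alpha$ (at $A$) and $\beta$ (at $B$). The kite $K$ is the union of $T$ and its reflection across $AB$; it has an $\alpha$-vertex $A$ (with angle $2\alpha$), a $\beta$-vertex $B$ (with angle $2\beta$), and two side vertices. The kite diagonal is the vector from the $\alpha$-vertex to the $\beta$-vertex, and the kite angle is the counterclockwise angle from the $x$-axis to the kite diagonal. $K$ is in standard position if its $\alpha$-vertex is at the origin and its $\beta$-vertex at $(1,0)$. A kite unfolding step replaces a kite by its image under rotation about its $\alpha$-vertex by $\pm2\alpha$ or about its $\beta$-vertex by $\pm2\beta$ (this corresponds to unfolding the triangle billiard along an orbit). A combinatorics of length $n$ is a sequence of $n-1$ such choices (angles $\pm2\alpha$ or $\pm2\beta$), producing kites $K_1=K,\dots,K_n$. A trigonometric polynomial in $\alpha,\beta$ with integer coefficients of degree at most $d$ is an integer linear combination of $\cos(a\alpha+b\beta)$ and $\sin(a\alpha+b\beta)$ with integers $|a|+|b|\le d$. *)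

From Stdlib Require Import Reals ZArith List.
Open Scope R_scope.

Definition point := (R * R)%type.

Definition rot (c : point) (phi : R) (p : point) : point :=
  (fst c + cos phi * (fst p - fst c) - sin phi * (snd p - snd c),
   snd c + sin phi * (fst p - fst c) + cos phi * (snd p - snd c)).

Record kite := Kite {
  avert : point;
  bvert : point;
  side1 : point;
  side2 : point
}.

(** The kite in standard position for the triangle with side AB = 1 and
    adjacent angles alpha (at A) and beta (at B): A = (0,0), B = (1,0),
    third vertex C at distance sin beta / sin(alpha+beta) from A (law of
    sines) in direction alpha, and its reflection across AB. *)
Definition std_kite (alpha beta : R) : kite :=
  let r := sin beta / sin (alpha + beta) in
  Kite (0, 0) (1, 0) (r * cos alpha, r * sin alpha) (r * cos alpha, - (r * sin alpha)).

Definition kite_map (f : point -> point) (k : kite) : kite :=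
  Kite (f (avert k)) (f (bvert k)) (f (side1 k)) (f (side2 k)).

Inductive vchoice := Valpha | Vbeta.
Definition kstep := (vchoice * bool)%type.

Definition sgn (b : bool) : R := if b then 1 else -1.

Definition kite_step (alpha beta : R) (k : kite) (s : kstep) : kite :=
  match s with
  | (Valpha, b) => kite_map (rot (avert k) (sgn b * (2 * alpha))) k
  | (Vbeta, b)  => kite_map (rot (bvert k) (sgn b * (2 * beta))) k
  end.

(** A combinatorics of length n is a list of n-1 steps; [last_kite] is K_n
    (K_1 = the standard kite). *)
Definition last_kite (alpha beta : R) (c : list kstep) : kite :=
  fold_left (kite_step alpha beta) c (std_kite alpha beta).

(** Formal trigonometric polynomials in alpha, beta with integer coefficients:
    a list of terms (a, b, p, q) standing for
    p cos(a alpha + b beta) + q sin(a alpha + b beta). *)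
Definition trigpoly := list (Z * Z * Z * Z).

Definition term_eval (alpha beta : R) (t : Z * Z * Z * Z) : R :=
  let '(a, b, p, q) := t in
  IZR p * cos (IZR a * alpha + IZR b * beta) + IZR q * sin (IZR a * alpha + IZR b * beta).

Definition teval (P : trigpoly) (alpha beta : R) : R :=
  fold_right (fun t acc => term_eval alpha beta t + acc) 0 P.

Definition tdeg_le (P : trigpoly) (d : Z) : Prop :=
  Forall (fun t => let '(a, b, _, _) := t in (Z.abs a + Z.abs b <= d)%Z) P.

Definition valid_angles (alpha beta : R) : Prop :=
  0 < alpha /\ 0 < beta /\ alpha + beta < PI.

Definition side_vert (sel : bool) (k : kite) : point :=
  if sel then side1 k else side2 k.

(* Every kite K_n is the standard kite moved by an orientation-preserving
   isometry: its alpha-vertex A_n is a translation, and its diagonal points in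
   direction a alpha + b beta for integers a, b.  Rotating about the
   alpha-vertex only changes a by +-2; rotating about the beta-vertex
   B = A + e(theta), e(t) = (cos t, sin t), sends A to B - e(theta +- 2 beta)
   and changes b by +-2.
   Hence A_n is a sum of unit vectors e(a alpha + b beta), B_n = A_n + e(theta),
   and a side vertex is A_n + (sin beta / sin (alpha + beta)) e(theta +- alpha),
   with every integer angle growing by at most 2 per step.  All of these are
   identities for arbitrary alpha, beta. *)
From Stdlib Require Import Reals ZArith List Lia.
Open Scope R_scope.

Definition polar (p : point) (r t : R) : point :=
  (fst p + r * cos t, snd p + r * sin t).

Lemma rot_center (c : point) (ph : R) : rot c ph c = c.
Proof. destruct c; unfold rot; simpl; f_equal; ring. Qed.

Lemma rot_polar (c p : point) (ph r t : R) :
  rot c ph (polar p r t) = polar (rot c ph p) r (t + ph).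
Proof.
  destruct c, p; unfold rot, polar; simpl; rewrite cos_plus, sin_plus; f_equal; ring.
Qed.

Lemma rot_polar_center (p : point) (ph r t : R) :
  rot (polar p r t) ph p = polar (polar p r t) (- r) (t + ph).
Proof.
  destruct p; unfold rot, polar; simpl; rewrite cos_plus, sin_plus; f_equal; ring.
Qed.

Lemma polar_polar_opp (p : point) (r t : R) : polar (polar p (- r) t) r t = p.
Proof. destruct p; unfold polar; simpl; f_equal; ring. Qed.

Section KiteAt.

Variables alpha beta : R.

(* The standard kite rotated by [th] about the origin, then translated to [A]. *)
Definition kite_at (A : point) (th : R) : kite :=
  let r := sin beta / sin (alpha + beta) in
  Kite A (polar A 1 th) (polar A r (th + alpha)) (polar A r (th - alpha)).

Lemma std_kite_at : std_kite alpha beta = kite_at (0, 0) 0.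
Proof.
  unfold std_kite, kite_at, polar; simpl.
  rewrite !Rplus_0_l, Rminus_0_l, cos_neg, sin_neg, cos_0, sin_0.
  f_equal; f_equal; ring.
Qed.

Lemma kite_step_alpha (A : point) (th : R) (sg : bool) :
  kite_step alpha beta (kite_at A th) (Valpha, sg) =
  kite_at A (th + sgn sg * (2 * alpha)).
Proof.
  unfold kite_step, kite_map, kite_at; simpl.
  rewrite !rot_polar, rot_center; f_equal; f_equal; ring.
Qed.

Lemma kite_step_beta (A : point) (th : R) (sg : bool) :
  let th' := th + sgn sg * (2 * beta) in
  kite_step alpha beta (kite_at A th) (Vbeta, sg) =
  kite_at (polar (polar A 1 th) (-1) th') th'.
Proof.
  intros th'; unfold kite_step, kite_map, kite_at; simpl.
  (* The literal [-1] is [IZR (-1)], not syntactically [- 1]. *)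
  change (-1) with (- (1)).
  rewrite rot_center, !rot_polar, rot_polar_center, polar_polar_opp.
  f_equal; f_equal; unfold th'; ring.
Qed.

Lemma side_vert_kite_at (sel : bool) (A : point) (th : R) :
  side_vert sel (kite_at A th) =
  polar A (sin beta / sin (alpha + beta)) (th + sgn sel * alpha).
Proof. unfold side_vert, kite_at; destruct sel; simpl; f_equal; ring. Qed.

End KiteAt.

(* Symbolic position of a kite: trigonometric polynomials for the coordinates
   of the alpha-vertex, and the integer angle [a alpha + b beta] of the
   diagonal. *)
Record kite_pos := KitePos {
  pos_x : trigpoly; pos_y : trigpoly; pos_a : Z; pos_b : Z }.

Definition pos_avert (alpha beta : R) (p : kite_pos) : point :=
  (teval (pos_x p) alpha beta, teval (pos_y p) alpha beta).

Definition pos_angle (alpha beta : R) (p : kite_pos) : R :=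
  IZR (pos_a p) * alpha + IZR (pos_b p) * beta.

Definition kite_of_pos (alpha beta : R) (p : kite_pos) : kite :=
  kite_at alpha beta (pos_avert alpha beta p) (pos_angle alpha beta p).

Definition zsgn (b : bool) : Z := if b then 1%Z else (-1)%Z.

Lemma IZR_zsgn (b : bool) : IZR (zsgn b) = sgn b.
Proof. now destruct b. Qed.

Definition pos_step (p : kite_pos) (s : kstep) : kite_pos :=
  let '(KitePos Px Py a b) := p in
  match s with
  | (Valpha, sg) => KitePos Px Py (a + 2 * zsgn sg) b
  | (Vbeta, sg) =>
      let b' := (b + 2 * zsgn sg)%Z in
      KitePos ((a, b', -1, 0) :: (a, b, 1, 0) :: Px)%Z
              ((a, b', 0, -1) :: (a, b, 0, 1) :: Py)%Z a b'
  end.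

Definition std_pos : kite_pos := KitePos nil nil 0 0.

Definition last_pos (c : list kstep) : kite_pos := fold_left pos_step c std_pos.

Lemma teval_polar (Px Py : trigpoly) (a b r : Z) (alpha beta : R) :
  polar (teval Px alpha beta, teval Py alpha beta) (IZR r) (IZR a * alpha + IZR b * beta) =
  (teval ((a, b, r, 0%Z) :: Px) alpha beta, teval ((a, b, 0%Z, r) :: Py) alpha beta).
Proof. unfold polar, teval; simpl; f_equal; ring. Qed.

Lemma kite_step_of_pos (alpha beta : R) (p : kite_pos) (s : kstep) :
  kite_step alpha beta (kite_of_pos alpha beta p) s =
  kite_of_pos alpha beta (pos_step p s).
Proof.
  destruct p as [Px Py a b], s as [[|] sg]; cbn [pos_step];
    unfold kite_of_pos, pos_avert, pos_angle; cbn [pos_x pos_y pos_a pos_b].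
  - rewrite kite_step_alpha, plus_IZR, mult_IZR, IZR_zsgn.
    f_equal; ring.
  - rewrite kite_step_beta.
    replace (IZR a * alpha + IZR b * beta + sgn sg * (2 * beta))
      with (IZR a * alpha + IZR (b + 2 * zsgn sg) * beta)
      by (rewrite plus_IZR, mult_IZR, IZR_zsgn; ring).
    now rewrite !teval_polar.
Qed.

Lemma std_kite_of_pos (alpha beta : R) :
  std_kite alpha beta = kite_of_pos alpha beta std_pos.
Proof.
  rewrite std_kite_at; unfold kite_of_pos, pos_angle; simpl.
  now replace (0 * alpha + 0 * beta) with 0 by ring.
Qed.

Lemma last_kite_of_pos (alpha beta : R) (c : list kstep) :
  last_kite alpha beta c = kite_of_pos alpha beta (last_pos c).
Proof.
  unfold last_kite, last_pos; rewrite std_kite_of_pos.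
  generalize std_pos.
  induction c as [|s c IH]; intros p; simpl; [reflexivity|].
  now rewrite kite_step_of_pos.
Qed.

Definition pos_deg_le (p : kite_pos) (d : Z) : Prop :=
  tdeg_le (pos_x p) d /\ tdeg_le (pos_y p) d /\ (Z.abs (pos_a p) + Z.abs (pos_b p) <= d)%Z.

Lemma tdeg_le_mono (P : trigpoly) (d d' : Z) :
  (d <= d')%Z -> tdeg_le P d -> tdeg_le P d'.
Proof.
  intros Hd; apply Forall_impl; intros [[[a b] p] q]; lia.
Qed.

Lemma pos_step_deg (p : kite_pos) (s : kstep) (d : Z) :
  pos_deg_le p d -> pos_deg_le (pos_step p s) (d + 2).
Proof.
  destruct p as [Px Py a b], s as [[|] sg]; unfold pos_deg_le; simpl;
    intros (Hx & Hy & Hab).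
  - repeat split; try (eapply tdeg_le_mono; [|eassumption]; lia).
    destruct sg; simpl; lia.
  - assert (Hx' := tdeg_le_mono _ d (d + 2) ltac:(lia) Hx).
    assert (Hy' := tdeg_le_mono _ d (d + 2) ltac:(lia) Hy).
    repeat split; repeat constructor; try assumption; destruct sg; simpl; lia.
Qed.

Lemma fold_pos_step_deg (c : list kstep) (p : kite_pos) (d : Z) :
  pos_deg_le p d ->
  pos_deg_le (fold_left pos_step c p) (d + 2 * Z.of_nat (length c)).
Proof.
  revert p d; induction c as [|s c IH]; intros p d Hp; cbn [fold_left length].
  - now rewrite Z.add_0_r.
  - rewrite Nat2Z.inj_succ.
    replace (d + 2 * Z.succ (Z.of_nat (length c)))%Z
      with (d + 2 + 2 * Z.of_nat (length c))%Z by lia.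
    now apply IH, pos_step_deg.
Qed.

Lemma last_pos_deg (c : list kstep) :
  pos_deg_le (last_pos c) (2 * Z.of_nat (length c)).
Proof.
  apply (fold_pos_step_deg c std_pos 0).
  repeat split; [constructor | constructor | simpl; lia].
Qed.

Theorem lemma3p1 (c : list kstep) :
  let n := (Z.of_nat (length c) + 1)%Z in
  (exists Pxa Pya Pxb Pyb : trigpoly,
      tdeg_le Pxa (2 * n - 2) /\ tdeg_le Pya (2 * n - 2) /\
      tdeg_le Pxb (2 * n - 2) /\ tdeg_le Pyb (2 * n - 2) /\
      forall alpha beta : R, valid_angles alpha beta ->
        fst (avert (last_kite alpha beta c)) = teval Pxa alpha beta /\
        snd (avert (last_kite alpha beta c)) = teval Pya alpha beta /\
        fst (bvert (last_kite alpha beta c)) = teval Pxb alpha beta /\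
        snd (bvert (last_kite alpha beta c)) = teval Pyb alpha beta) /\
  (forall sel : bool,
    exists (P Q : trigpoly) (m l : Z),
      tdeg_le P (2 * n - 2) /\ tdeg_le Q (2 * n - 2) /\
      (Z.abs m + Z.abs l <= 2 * n - 1)%Z /\
      forall alpha beta : R, valid_angles alpha beta ->
        fst (side_vert sel (last_kite alpha beta c)) =
          teval P alpha beta + sin beta / sin (alpha + beta) * cos (IZR m * alpha + IZR l * beta) /\
        snd (side_vert sel (last_kite alpha beta c)) =
          teval Q alpha beta + sin beta / sin (alpha + beta) * sin (IZR m * alpha + IZR l * beta)).
Proof.
  intros n.
  assert (Hdeg := last_pos_deg c).
  assert (Hpos := fun alpha beta => last_kite_of_pos alpha beta c).
  replace (2 * n - 2)%Z with (2 * Z.of_nat (length c))%Z by (unfold n; lia).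
  destruct (last_pos c) as [Px Py a b]; destruct Hdeg as (Hx & Hy & Hab).
  cbn [pos_x pos_y pos_a pos_b] in Hx, Hy, Hab.
  split.
  - exists Px, Py, ((a, b, 1, 0) :: Px)%Z, ((a, b, 0, 1) :: Py)%Z.
    split; [assumption|]. split; [assumption|].
    split; [now constructor|]. split; [now constructor|].
    intros alpha beta _; rewrite Hpos.
    unfold kite_of_pos, kite_at, pos_avert, pos_angle; cbn [avert bvert pos_x pos_y pos_a pos_b].
    now rewrite teval_polar.
  - intros sel; exists Px, Py, (a + zsgn sel)%Z, b.
    split; [assumption|]. split; [assumption|].
    split; [unfold n; destruct sel; cbn [zsgn]; lia|].
    intros alpha beta _; rewrite Hpos.
    unfold kite_of_pos, pos_avert, pos_angle; cbn [pos_x pos_y pos_a pos_b].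
    replace (IZR (a + zsgn sel) * alpha + IZR b * beta)
      with (IZR a * alpha + IZR b * beta + sgn sel * alpha)
      by (rewrite plus_IZR, IZR_zsgn; ring).
    now rewrite side_vert_kite_at.
Qed.
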